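(* Let $D=\{a_1/q_1,\dots,a_r/q_r\}\subset\mathbb{T}$, where each $a_j/q_j$ is an irreducible fraction with $q_j\equiv 2\pmod 4$. Then $\mathrm{Md}_{\mathbb{T}}(D)=1/2$, and there exists a Borel $D$-avoiding set $A\subset\mathbb{T}$ with $\mu(A)=1/2$.
   Context: $\mathbb{T}=\mathbb{R}/\mathbb{Z}$ with Haar probability measure $\mu$; $A$ is $D$-avoiding if $(A-A)\cap D=\emptyset$. $\mathrm{Md}_{\mathbb{T}}(D)=\sup\{\mu(A): A\subset\mathbb{T}\text{ Borel},\ (A-A)\cap D=\emptyset\}$. *)

(* The circle T = R/Z is modelled by its
   fundamental domain [0,1) with addition/subtraction taken modulo 1;
   the Haar probability measure on T corresponds to Lebesgue measure
   restricted to [0,1), and Borel sets of T to Borel subsets of [0,1). *)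
From HB Require Import structures.
From mathcomp Require Import all_boot all_order all_algebra.
From mathcomp Require Import all_classical all_reals all_analysis.
Set Implicit Arguments. Unset Strict Implicit. Unset Printing Implicit Defensive.
Import Order.TTheory GRing.Theory Num.Theory.
Local Open Scope classical_set_scope.
Local Open Scope ring_scope.

Definition tmod {R : realType} (x : R) : R := x - (Num.floor x)%:~R.

Definition avoiding {R : realType} (D A : set R) : Prop :=
  forall x y, A x -> A y -> ~ D (tmod (x - y)).

Definition avoiding_sets {R : realType} (D : set R) : set (set R) :=
  [set A : set R | measurable A /\ A `<=` `[0, 1[%classic /\ avoiding D A].

Definition MdT {R : realType} (D : set R) : \bar R :=
  ereal_sup ((@lebesgue_measure R) @` avoiding_sets D).

Definition frac_pt {R : realType} (a : int) (q : nat) : R :=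
  tmod ((a%:~R : R) / (q%:R : R)).

From HB Require Import structures.
From mathcomp Require Import all_boot all_order all_algebra.
From mathcomp Require Import all_classical all_reals all_analysis.
From mathcomp Require Import ring lra zify.
Import Order.TTheory GRing.Theory Num.Theory.
Local Open Scope classical_set_scope.
Local Open Scope ring_scope.

(* Upper bound: if A avoids one point d of T, then A and its rotation A + d
   are disjoint subsets of T of equal measure, so mu(A) <= 1/2.
   Lower bound: write q_j = 2 m_j with m_j odd and let M be the product of the
   m_j, an odd number; A = {x : frac(M x) < 1/2} has measure 1/2.  For x, y in A
   the real 2M(x - y) is within distance 1 of an even integer, hence is not an
   odd integer; but x - y = a_j / q_j + n would give 2M(x - y) = c_j a_j + 2Mn
   with c_j = M / m_j, which is odd since a_j is coprime to the even q_j. *)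

Section translation.
Context {R : realType}.
Local Notation mu := (@lebesgue_measure R).

Lemma measurable_subr (c : R) :
  measurable_fun [set: measurableTypeR R] (fun x : R => x - c).
Proof. exact: measurable_realfun.measurable_funB. Qed.
(* Lets HB infer the measure structure of [pushforward mu (fun x => x - c)]. *)
#[local] Hint Extern 0 (measurable_fun _ (fun x => x - _)) =>
  solve [apply: measurable_subr] : core.

Lemma measurable_translate (c : R) (A : set R) : measurable A ->
  measurable [set y | A (y - c)].
Proof.
by move=> mA; rewrite -[X in measurable X]setTI; exact: measurable_subr.
Qed.

Lemma lebesgue_measure_translate (c : R) (A : set R) : measurable A ->
  mu [set y | A (y - c)] = mu A.
Proof.
move=> mA; apply/esym.
have := @lebesgue_measure_unique R
  (pushforward mu ((fun x : R => x - c) : _ -> measurableTypeR R)).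
apply=> // _ [[a b]] _ <- /=; rewrite /pushforward /=.
have -> : (fun x => x - c) @^-1` `]a, b]%classic = `](a + c), (b + c)]%classic.
  by apply/seteqP; split => x /=; rewrite !in_itv /= ltrBrDr lerBlDr.
rewrite !lebesgue_measure_itv /= !lte_fin ltrD2r.
by case: ifP => // _; rewrite -!EFinB; congr (_%:E); ring.
Qed.

End translation.

Section tmod.
Context {R : realType}.

Lemma tmod_itv (x : R) : 0 <= tmod x < 1.
Proof.
rewrite /tmod; have /andP[h1 h2] := floor_itv x.
rewrite intrD in h2; apply/andP; split; lra.
Qed.

Lemma tmod_id (x : R) : 0 <= x < 1 -> tmod x = x.
Proof. by move=> hx; rewrite /tmod (@floor_def _ x 0) ?subr0 // add0r. Qed.

Lemma tmodDz (x : R) (n : int) : tmod (x + n%:~R) = tmod x.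
Proof. by rewrite /tmod floorDrz ?intr_int // intrD intrKfloor; ring. Qed.

Lemma tmod_eqP (x y : R) : tmod x = tmod y -> exists n : int, x = y + n%:~R.
Proof.
by rewrite /tmod => h; exists (Num.floor x - Num.floor y); rewrite intrB; lra.
Qed.

End tmod.

Section rotation.
Context {R : realType}.
Local Notation mu := (@lebesgue_measure R).
Variables (d : R) (A : set R).
Hypotheses (d01 : 0 <= d < 1) (mA : measurable A).
Hypothesis A01 : A `<=` `[0, 1[%classic.

(* The rotation A + d of A in T, represented in [0, 1). *)
Definition rotation : set R :=
  [set y | (A `&` `]-oo, 1 - d[) (y - d)] `|`
  [set y | (A `&` `[1 - d, +oo[) (y - (d - 1))].

Let in01 {y} : A y -> 0 <= y < 1.
Proof. by move/A01; rewrite /= in_itv. Qed.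

Lemma measurable_rotation : measurable rotation.
Proof. by apply: measurableU; apply: measurable_translate; apply: measurableI. Qed.

Lemma rotation_sub01 : rotation `<=` `[0, 1[%classic.
Proof.
case/andP: d01 => d0 d1.
move=> y [[Ay]|[Ay]]; rewrite /= !in_itv /= ?andbT => h;
  have /andP[] := in01 Ay => ? ?; apply/andP; split; lra.
Qed.

Lemma rotation_tmod y : rotation y -> exists2 x, A x & tmod (y - x) = d.
Proof.
move=> [[Ay _]|[Ay _]]; [exists (y - d) | exists (y - (d - 1))] => //.
  by rewrite opprB addrC subrK tmod_id.
have -> : y - (y - (d - 1)) = d + (-1)%:~R by rewrite intrN; ring.
by rewrite tmodDz tmod_id.
Qed.

Lemma lebesgue_measure_rotation : mu rotation = mu A.
Proof.
case/andP: d01 => d0 d1.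
set Al := A `&` `]-oo, 1 - d[; set Ar := A `&` `[1 - d, +oo[.
have mAl : measurable Al by apply: measurableI.
have mAr : measurable Ar by apply: measurableI.
have splitA : A = Al `|` Ar.
  apply/seteqP; split => [y Ay|y [[]|[]] //].
  by case: (ltP y (1 - d)) => h; [left|right]; split; rewrite //= in_itv /= h.
have disjA : Al `&` Ar = set0.
  by apply/seteqP; split => // y [[_ +] [_]]; rewrite /= !in_itv /= andbT; lra.
have disj_rot : [set y | Al (y - d)] `&` [set y | Ar (y - (d - 1))] = set0.
  apply/seteqP; split => // y [[Ay _] [Ay' _]].
  by have /andP[] := in01 Ay; have /andP[] := in01 Ay'; lra.
rewrite [in RHS]splitA !measureU //; try exact: measurable_translate.
by congr (_ + _)%E; apply: lebesgue_measure_translate.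
Qed.

End rotation.

Lemma avoiding_point_measure_le_half {R : realType} {d : R} {A : set R} :
  0 <= d < 1 -> measurable A -> A `<=` `[0, 1[%classic ->
  (forall x y, A x -> A y -> tmod (x - y) <> d) ->
  (lebesgue_measure A <= (1 / 2)%:E)%E.
Proof.
move=> d01 mA A01 avA.
have mrA := measurable_rotation d A mA.
have disj : A `&` rotation d A = set0.
  apply/seteqP; split => // y [Ay /(rotation_tmod d A d01)[x Ax]]; exact: avA.
have le1 : (lebesgue_measure A + lebesgue_measure A <= 1%:E)%E.
  rewrite -{2}(lebesgue_measure_rotation d A d01 mA A01) -measureU //.
  have <- : lebesgue_measure `[0%R, 1%R[%classic = 1%:E :> \bar R.
    by rewrite lebesgue_measure_itv /= lte_fin ltr01 sube0.
  apply: le_measure; rewrite ?inE //; first exact: measurableU.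
  by move=> y [/A01|/(rotation_sub01 d A d01 A01)].
move: le1; case: (lebesgue_measure A) => [x| |] //=; last by move=> _; exact: leNye.
by rewrite -EFinD !lee_fin; lra.
Qed.

Lemma double_subr_not_odd {R : realType} {s t : R} {k l w : int} :
  k%:~R <= s < k%:~R + 1 / 2 -> l%:~R <= t < l%:~R + 1 / 2 ->
  odd `|w|%N -> 2 * (s - t) != w%:~R.
Proof.
move=> /andP[s1 s2] /andP[t1 t2] oddw; apply/eqP => hw.
have lt1 : `|(w - 2 * k + 2 * l)%:~R| < 1 :> R.
  by rewrite !intrD !intrM !intrN -hw ltr_norml; apply/andP; split; lra.
have : (`|w - 2 * k + 2 * l| < 1)%R by rewrite -(ltr_int R) intr_norm.
lia.
Qed.

Lemma tmod_eq_odd_fraction {R : realType} {x : R} {a : int} {m c : nat} :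
  (0 < m)%N -> odd c -> odd `|a|%N ->
  tmod x = tmod (a%:~R / (2 * m)%:R) ->
  exists2 w : int, odd `|w|%N & 2 * (m * c)%:R * x = w%:~R.
Proof.
move=> m0 oddc odda /tmod_eqP[n ->].
exists (c%:Z * a + 2 * ((m * c)%:Z * n))%R; first lia.
have m0' : (m%:R : R) != 0 by rewrite pnatr_eq0 -lt0n.
by rewrite !(intrD, intrM) /= -!pmulrn !natrM; field.
Qed.

Section half_intervals.
Context {R : realType}.
Local Notation mu := (@lebesgue_measure R).
Variable M : nat.
Hypothesis M0 : (0 < M)%N.

Definition half_interval (k : nat) : set R :=
  `[k%:R / M%:R, (k%:R + 1 / 2) / M%:R[%classic.

Definition half_intervals : set R := \big[setU/set0]_(k < M) half_interval k.

Let M0' : (0 : R) < M%:R. Proof. by rewrite ltr0n. Qed.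
Let M_neq0 : (M%:R : R) != 0. Proof. exact: lt0r_neq0. Qed.

Lemma in_half_interval k x :
  half_interval k x <-> k%:R <= M%:R * x < k%:R + 1 / 2.
Proof.
by rewrite /half_interval /= in_itv /= ler_pdivrMr // ltr_pdivlMr // ![x * _]mulrC.
Qed.

Lemma lebesgue_measure_half_interval k :
  mu (half_interval k) = (1 / (2 * M%:R))%:E.
Proof.
rewrite lebesgue_measure_itv /= lte_fin ltr_pM2r ?invr_gt0 // ltrDl.
rewrite ifT; last by rewrite divr_gt0.
by rewrite -EFinB; congr (_%:E); field.
Qed.

Lemma trivIset_half_interval : trivIset setT half_interval.
Proof.
apply/trivIsetP => i j _ _ ij; apply/seteqP; split => // x [].
move=> /in_half_interval/andP[xi1 xi2] /in_half_interval/andP[xj1 xj2].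
have [ltij|ltji] : (i < j)%N \/ (j < i)%N by move: ij; rewrite neq_ltn => /orP.
  have : (i.+1%:R : R) <= j%:R by rewrite ler_nat.
  rewrite -natr1; lra.
have : (j.+1%:R : R) <= i%:R by rewrite ler_nat.
rewrite -natr1; lra.
Qed.

Lemma measurable_half_intervals : measurable half_intervals.
Proof. by apply: bigsetU_measurable => k _; exact: measurable_itv. Qed.

Lemma lebesgue_measure_half_intervals : mu half_intervals = (1 / 2)%:E.
Proof.
rewrite measure_bigsetU; last 2 first.
- by move=> k; exact: measurable_itv.
- exact: trivIset_half_interval.
rewrite (eq_bigr _ (fun (k : 'I_M) _ => lebesgue_measure_half_interval k)).
rewrite sumEFin sumr_const card_ord -mulr_natr; congr (_%:E); field; exact: M_neq0.
Qed.

Lemma half_intervalsP x :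
  half_intervals x <-> exists2 k, (k < M)%N & k%:R <= M%:R * x < k%:R + 1 / 2.
Proof.
rewrite /half_intervals -bigcup_mkord.
by split=> [[k hk /in_half_interval]|[k hk /in_half_interval]]; exists k.
Qed.

Lemma half_intervals_sub01 : half_intervals `<=` `[0, 1[%classic.
Proof.
move=> x /half_intervalsP[k kM /andP[xk1 xk2]]; rewrite /= in_itv /=.
have : (k.+1%:R : R) <= M%:R by rewrite ler_nat.
rewrite -natr1 => kM'; have k0 : (0 : R) <= k%:R by [].
by rewrite -(pmulr_rge0 _ M0') -(ltr_pM2l M0') mulr1; apply/andP; split; lra.
Qed.

End half_intervals.

Lemma odd_prod (I : finType) (P : pred I) (F : I -> nat) :
  (forall i, P i -> odd (F i)) -> odd (\prod_(i | P i) F i).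
Proof. by move=> oddF; apply: (big_ind odd) => // x y ox oy; rewrite oddM ox. Qed.

Lemma half_intervals_avoiding {R : realType} (I : finType)
    (a : I -> int) (m : I -> nat) :
  (forall j, odd (m j)) -> (forall j, odd `|a j|%N) ->
  avoiding [set frac_pt (a j) (2 * m j) | j in [set: I]]
    (@half_intervals R (\prod_j m j)).
Proof.
move=> oddm odda; have M0 : (0 < \prod_j m j)%N by rewrite odd_gt0 // odd_prod.
move=> x y /(half_intervalsP _ M0)[k _ hx] /(half_intervalsP _ M0)[l _ hy] [j _ hj].
have [c oddc Mc] : exists2 c, odd c & (\prod_j m j = m j * c)%N.
  by exists (\prod_(i | i != j) m i); [exact: odd_prod | rewrite (bigD1 j)].
rewrite Mc in hx hy.
have m0 : (0 < m j)%N by rewrite odd_gt0.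
have [w oddw hw] := tmod_eq_odd_fraction m0 oddc (odda j) (esym hj).
have := double_subr_not_odd (k := k) (l := l) hx hy oddw.
by rewrite -mulrBr mulrA hw eqxx.
Qed.

Lemma odd_half_eq2_mod4 {n : nat} :
  n = 2 %[mod 4] -> odd (n %/ 2) /\ n = (2 * (n %/ 2))%N.
Proof.
move=> n2; split; last by lia.
have : ((n %/ 2) %% 2 = 1)%N by lia.
by rewrite modn2; case: odd.
Qed.

Lemma odd_coprime_even (n q : nat) : coprime n q -> ~~ odd q -> odd n.
Proof.
by move=> nq evq; rewrite -coprimen2; apply: coprime_dvdr nq; rewrite dvdn2.
Qed.

Lemma MdT_le_half {R : realType} (D : set R) (d : R) :
  D d -> 0 <= d < 1 -> (MdT D <= (1 / 2)%:E)%E.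
Proof.
move=> Dd d01; apply: ge_ereal_sup => _ [A [mA [A01 avA]] <-].
apply: (avoiding_point_measure_le_half d01) => // x y Ax Ay dxy.
by apply: (avA x y Ax Ay); rewrite dxy.
Qed.

Theorem mainTheorem16 (R : realType) (r : nat) (a : 'I_r -> int) (q : 'I_r -> nat)
  (hr : (0 < r)%N)
  (hq : forall j, q j = 2 %[mod 4])
  (hcop : forall j, coprime `|a j|%N (q j)) :
  let D : set R := [set frac_pt (a j) (q j) | j in [set: 'I_r]] in
  MdT D = (1 / 2 : R)%:E /\
  exists A : set R, [/\ measurable A, A `<=` `[0, 1[, avoiding D A &
                        lebesgue_measure A = (1 / 2 : R)%:E].
Proof.
move=> D; pose m j := (q j %/ 2)%N.
have oddm j : odd (m j) by case: (odd_half_eq2_mod4 (hq j)).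
have qm j : q j = (2 * m j)%N by case: (odd_half_eq2_mod4 (hq j)).
have odda j : odd `|a j|%N.
  by apply: odd_coprime_even (hcop j) _; rewrite qm oddM.
have M0 : (0 < \prod_j m j)%N by rewrite odd_gt0 // odd_prod.
have avA : avoiding D (half_intervals (\prod_j m j)).
  have -> : D = [set frac_pt (a j) (2 * m j) | j in [set: 'I_r]].
    by rewrite /D; congr image; apply: funext => j; rewrite qm.
  exact: half_intervals_avoiding.
have A01 := half_intervals_sub01 _ M0.
have mA := measurable_half_intervals (\prod_j m j).
have muA := lebesgue_measure_half_intervals _ M0.
split; last by exists (half_intervals (\prod_j m j)).
apply/le_anti/andP; split.
  pose j0 := Ordinal hr.
  by apply: (MdT_le_half _ (frac_pt (a j0) (q j0))); [exists j0 | exact: tmod_itv].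
by rewrite -muA; apply: ereal_sup_ubound; exists (half_intervals (\prod_j m j)).
Qed.
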